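(* Assume Assumption A. Then the family of sequences $(\mu_N(\eta))_{N\ge1}$, $\eta\in E$, is ordered.
   Context: Setting: $E$ is a fixed finite set; for each $N\ge1$, $(\eta^N_t)$ is a continuous-time irreducible Markov chain on $E$ with jump rates $R_N(\eta,\xi)$ and unique invariant probability measure $\mu_N$. Ordered families: a finite family of sequences of positive reals $(a^r_N)_{N\ge1}$, $r\in\mathfrak R$, is ordered if for all $r\neq s$ the sequence $\arctan(a^r_N/a^s_N)$ converges as $N\to\infty$. Assumption A: (i) for each $\eta\neq\xi$, either $R_N(\eta,\xi)=0$ for all $N$ or $R_N(\eta,\xi)>0$ for all $N$; let $\mathbb B=\{(\eta,\xi):\eta\ne\xi,R_N(\eta,\xi)>0\}$. (ii) For every $m\ge1$ the family $\prod_{(\eta,\xi)\in\mathbb B}R_N(\eta,\xi)^{k(\eta,\xi)}$, indexed by $k:\mathbb B\to\mathbb Z_+$ with $\sum k=m$, is ordered. *)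

From mathcomp Require Import all_boot.
From Stdlib Require Import Reals.

Set Implicit Arguments.
Unset Strict Implicit.
Unset Printing Implicit Defensive.

(* Sequences are indexed by nat; only indices N >= 1 are meaningful. *)

Definition ordered_family (I : Type) (a : I -> nat -> R) : Prop :=
  (forall r N, (1 <= N)%nat -> (0 < a r N)%R) /\
  (forall r s, r <> s ->
     exists l : R, Un_cv (fun N => atan (a r N / a s N)) l).

Inductive reach (E : finType) (Rt : E -> E -> R) : E -> E -> Prop :=
  | reach_refl x : reach Rt x x
  | reach_step x y z : x <> y -> (0 < Rt x y)%R -> reach Rt y z -> reach Rt x z.

Definition irreducible (E : finType) (Rt : E -> E -> R) : Prop :=
  forall x y : E, reach Rt x y.

Definition invariant_prob (E : finType) (Rt : E -> E -> R) (mu : E -> R) : Prop :=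
  (forall x, (0 <= mu x)%R) /\
  \big[Rplus/0%R]_(x : E) mu x = 1%R /\
  (forall xi : E,
     \big[Rplus/0%R]_(eta : E | eta != xi) (mu eta * Rt eta xi)%R =
     (mu xi * \big[Rplus/0%R]_(zeta : E | zeta != xi) Rt xi zeta)%R).

(* The edge set B = {(eta,xi) : eta <> xi, R_N(eta,xi) > 0} (well defined
   under Assumption A(i); we read it at N = 1). *)
Definition inB (E : finType) (Rn : nat -> E -> E -> R) (x y : E) : Prop :=
  x <> y /\ (0 < Rn 1%nat x y)%R.

(* Exponent vectors k : B -> Z_+ with sum k = m, encoded as functions
   E -> E -> nat vanishing outside B. *)
Definition exps (E : finType) (Rn : nat -> E -> E -> R) (m : nat) : Type :=
  { k : E -> E -> nat |
      (forall x y, k x y <> 0%nat -> inB Rn x y) /\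
      \big[addn/0%nat]_(p : E * E | p.1 != p.2) k p.1 p.2 = m }.

Definition rate_monomial (E : finType) (Rn : nat -> E -> E -> R) (m : nat)
    (k : exps Rn m) (N : nat) : R :=
  \big[Rmult/1%R]_(p : E * E | p.1 != p.2) pow (Rn N p.1 p.2) (proj1_sig k p.1 p.2).

Definition assumptionA (E : finType) (Rn : nat -> E -> E -> R) : Prop :=
  (forall x y : E, x <> y ->
     (forall N, (1 <= N)%nat -> Rn N x y = 0%R) \/
     (forall N, (1 <= N)%nat -> (0 < Rn N x y)%R)) /\
  (forall m : nat, (1 <= m)%nat -> ordered_family (@rate_monomial E Rn m)).

From mathcomp Require Import all_boot.
From HB Require Import structures.
From Stdlib Require Import Reals Lra Lia Classical.

(* Eliminating one state z of a chain on S with rates q (the stochastic complement)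
   gives an irreducible chain on S minus z whose rates, scaled by the exit rate t of z,
   are q a b * t + q a z * q z b, and the invariant measure restricted to S minus z is
   invariant for it; the mass at z is then recovered from the balance equation at z.
   By induction on |S|, mu_N is proportional to positive weights P_x(N), each a sum of
   rate monomials of one common degree D.  Assumption A says the degree-D monomials are
   totally preordered by "the ratio converges"; dividing P_r and P_s by a dominant
   monomial shows that atan (P_r / P_s) converges. *)

Set Implicit Arguments.
Unset Strict Implicit.
Unset Printing Implicit Defensive.

Lemma Rplus_assoc_law : associative Rplus.
Proof. by move=> *; rewrite Rplus_assoc. Qed.

Lemma Rmult_assoc_law : associative Rmult.
Proof. by move=> *; rewrite Rmult_assoc. Qed.

HB.instance Definition _ :=
  Monoid.isComLaw.Build R 0%R Rplus Rplus_assoc_law Rplus_comm Rplus_0_l.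
HB.instance Definition _ :=
  Monoid.isComLaw.Build R 1%R Rmult Rmult_assoc_law Rmult_comm Rmult_1_l.
HB.instance Definition _ := Monoid.isMulLaw.Build R 0%R Rmult Rmult_0_l Rmult_0_r.
HB.instance Definition _ :=
  Monoid.isAddLaw.Build R Rmult Rplus Rmult_plus_distr_r Rmult_plus_distr_l.

Section Sums.
Local Open Scope R_scope.

Lemma sumR_ge0 (I : Type) (r : seq I) (P : pred I) (F : I -> R) :
  (forall i, P i -> 0 <= F i) -> 0 <= \big[Rplus/0]_(i <- r | P i) F i.
Proof. by move=> F0; apply: big_ind => // *; lra. Qed.

Lemma sumR_gt0 (I : finType) (P : pred I) (F : I -> R) j :
  (forall i, P i -> 0 <= F i) -> P j -> 0 < F j -> 0 < \big[Rplus/0]_(i | P i) F i.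
Proof.
move=> F0 Pj Fj; rewrite (bigD1 j) //=.
suff : 0 <= \big[Rplus/0]_(i | P i && (i != j)) F i by lra.
by apply: sumR_ge0 => i /andP[/F0].
Qed.

Lemma sumR_ge_term (I : Type) (r : seq I) (F : I -> R) j :
  (forall i, 0 <= F i) -> List.In j r -> F j <= \big[Rplus/0]_(i <- r) F i.
Proof.
move=> F0; elim: r => [|i r IH] //= Hj; rewrite big_cons.
have := F0 i; have := @sumR_ge0 _ r xpredT F (fun k _ => F0 k).
by case: Hj => [<-|/IH]; lra.
Qed.

Lemma proportional_normalized (I : finType) (v p : I -> R) :
  \big[Rplus/0]_i v i = 1 -> 0 < \big[Rplus/0]_i p i ->
  (forall x y, v x * p y = v y * p x) ->
  forall x, v x = p x * / \big[Rplus/0]_i p i.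
Proof.
move=> Hv Hp Hvp x.
have Epx : p x = v x * \big[Rplus/0]_i p i.
  rewrite -[p x]Rmult_1_r -Hv !big_distrr /=; apply: eq_bigr => y _.
  by rewrite Hvp Rmult_comm.
by rewrite Epx; field; lra.
Qed.

End Sums.

Lemma In_catl (T : Type) (x : T) (s1 s2 : seq T) :
  List.In x s1 -> List.In x (s1 ++ s2).
Proof. by elim: s1 => //= y s1 IH [->|/IH]; [left | right]. Qed.

Lemma In_catr (T : Type) (x : T) (s1 s2 : seq T) :
  List.In x s2 -> List.In x (s1 ++ s2).
Proof. by elim: s1 => //= y s1 IH /IH; right. Qed.

Section Sequences.
Local Open Scope R_scope.

Definition pos_seq (a : nat -> R) := forall N, (1 <= N)%nat -> 0 < a N.

Definition ratio_cvg (a b : nat -> R) := exists L, Un_cv (fun N => a N / b N) L.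

Lemma Un_cv_const c : Un_cv (fun _ => c) c.
Proof. by move=> eps Heps; exists 0%nat => n _; rewrite /Rdist Rminus_diag Rabs_R0. Qed.

Lemma Un_cv_ext_pos (u v : nat -> R) l :
  (forall N, (1 <= N)%nat -> u N = v N) -> Un_cv u l -> Un_cv v l.
Proof.
move=> Euv /(CV_shift' _ 1) Hu; apply: (CV_shift _ 1).
by apply: Un_cv_ext Hu => n; rewrite Euv //; apply/leP; lia.
Qed.

Lemma Un_cv_lb_pos (u : nat -> R) l c :
  (forall N, (1 <= N)%nat -> c <= u N) -> Un_cv u l -> c <= l.
Proof.
move=> Hc /(CV_shift' _ 1) Hu.
apply: (Rle_cv_lim (Un := fun _ => c) _ (Un_cv_const c) Hu) => n.
by apply: Hc; apply/leP; lia.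
Qed.

Lemma continuity_pt_atan x : continuity_pt atan x.
Proof. exact: derivable_continuous_pt (derivable_pt_atan x). Qed.

Lemma atan_gt0 x : 0 < x -> 0 < atan x.
Proof. by move=> Hx; rewrite -atan_0; apply: atan_increasing. Qed.

Lemma atan_div_flip a b : 0 < a -> 0 < b -> atan (b / a) = PI / 2 - atan (a / b).
Proof.
move=> Ha Hb; rewrite -atan_inv; last exact: Rdiv_lt_0_compat.
by congr atan; field; lra.
Qed.

Lemma Un_cv_of_atan (u : nat -> R) l : - PI / 2 < l < PI / 2 ->
  Un_cv (fun N => atan (u N)) l -> Un_cv u (tan l).
Proof.
move=> Hl /(continuity_seq tan) Htan.
apply: Un_cv_ext (Htan (derivable_continuous_pt _ _ (derivable_pt_tan _ Hl))).
by move=> N; rewrite /= tan_atan.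
Qed.

Lemma comparable_of_atan_cvg a b : pos_seq a -> pos_seq b ->
  (exists l, Un_cv (fun N => atan (a N / b N)) l) -> ratio_cvg a b \/ ratio_cvg b a.
Proof.
move=> Ha Hb [l Hl]; have PI0 := PI_RGT_0.
have atan_pos (u v : nat -> R) : pos_seq u -> pos_seq v ->
    forall N, (1 <= N)%nat -> 0 <= atan (u N / v N).
  move=> Hu Hv N HN; apply: Rlt_le; apply: atan_gt0.
  by apply: Rdiv_lt_0_compat; [exact: Hu | exact: Hv].
have Hba : Un_cv (fun N => atan (b N / a N)) (PI / 2 - l).
  apply: Un_cv_ext_pos (CV_minus _ _ _ _ (Un_cv_const _) Hl) => N HN.
  by rewrite (atan_div_flip (Ha N HN) (Hb N HN)).
have l_ge0 := Un_cv_lb_pos (atan_pos _ _ Ha Hb) Hl.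
have l_le := Un_cv_lb_pos (atan_pos _ _ Hb Ha) Hba.
case: (Rlt_le_dec l (PI / 2)) => Hl2.
  by left; exists (tan l); apply: Un_cv_of_atan Hl; lra.
by right; exists (tan (PI / 2 - l)); apply: Un_cv_of_atan Hba; lra.
Qed.

Lemma ratio_cvg_refl a : pos_seq a -> ratio_cvg a a.
Proof.
move=> Ha; exists 1; apply: Un_cv_ext_pos (Un_cv_const 1) => N HN.
by rewrite /Rdiv Rinv_r //; have := Ha N HN; lra.
Qed.

Lemma ratio_cvg_trans b a c : pos_seq b -> ratio_cvg a b -> ratio_cvg b c -> ratio_cvg a c.
Proof.
move=> Hb [L1 H1] [L2 H2]; exists (L1 * L2).
apply: Un_cv_ext_pos (CV_mult _ _ _ _ H1 H2) => N HN.
have := Hb N HN => ?.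
by rewrite /Rdiv Rmult_assoc -(Rmult_assoc (/ b N)) Rinv_l ?Rmult_1_l //; lra.
Qed.

Lemma ratio_cvg_big (I : Type) (r : seq I) (F : I -> nat -> R) d :
  (forall i, List.In i r -> ratio_cvg (F i) d) ->
  ratio_cvg (fun N => \big[Rplus/0]_(i <- r) F i N) d.
Proof.
elim: r => [|i r IH] Hr.
  by exists 0; apply: Un_cv_ext (Un_cv_const 0) => N; rewrite big_nil /Rdiv Rmult_0_l.
have [L1 H1] := Hr i (or_introl erefl).
have [L2 H2] := IH (fun j Hj => Hr j (or_intror Hj)).
exists (L1 + L2); apply: Un_cv_ext (CV_plus _ _ _ _ H1 H2) => N.
by rewrite big_cons Rdiv_plus_distr.
Qed.

Lemma exists_dominant (I : Type) (F : I -> nat -> R) (i : I) (r : seq I) :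
  (forall i, pos_seq (F i)) ->
  (forall i j, ratio_cvg (F i) (F j) \/ ratio_cvg (F j) (F i)) ->
  exists2 m, List.In m (i :: r) & forall j, List.In j (i :: r) -> ratio_cvg (F j) (F m).
Proof.
move=> Fpos Fcmp; elim: r i => [|j r IH] i.
  by exists i; [left | move=> k [<-|[]]; apply: ratio_cvg_refl].
have [m Hm Hdom] := IH j.
case: (Fcmp i m) => [Him | Hmi].
  by exists m; [right | move=> k [<-|Hk] //; apply: Hdom].
exists i; [by left | move=> k [<-|Hk]]; first exact: ratio_cvg_refl.
exact: ratio_cvg_trans (Hdom k Hk) Hmi.
Qed.

Lemma Un_cv_div_ratio a b d La Lb : pos_seq b -> pos_seq d -> Lb <> 0 ->
  Un_cv (fun N => a N / d N) La -> Un_cv (fun N => b N / d N) Lb ->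
  Un_cv (fun N => a N / b N) (La / Lb).
Proof.
move=> Hb Hd Lb0 HLa HLb.
have Hinv : continuity_pt Rinv Lb.
  exact: continuity_pt_inv (derivable_continuous_pt _ _ (derivable_pt_id Lb)) Lb0.
apply: Un_cv_ext_pos (CV_mult _ _ _ _ HLa (continuity_seq _ _ _ Hinv HLb)) => N HN.
by move: (Hb N HN) (Hd N HN) => ? ?; field; lra.
Qed.

Lemma atan_ratio_cvg a b d La Lb : pos_seq a -> pos_seq b -> pos_seq d ->
  Un_cv (fun N => a N / d N) La -> Un_cv (fun N => b N / d N) Lb -> 0 < La + Lb ->
  exists l, Un_cv (fun N => atan (a N / b N)) l.
Proof.
move=> Ha Hb Hd HLa HLb HL.
have lim_ge0 u L : pos_seq u -> Un_cv (fun N => u N / d N) L -> 0 <= L.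
  move=> Hu; apply: Un_cv_lb_pos => N HN; apply: Rlt_le.
  by apply: Rdiv_lt_0_compat; [exact: Hu | exact: Hd].
have La0 := lim_ge0 _ _ Ha HLa; have Lb0 := lim_ge0 _ _ Hb HLb.
case: (Rlt_le_dec 0 Lb) => Lb_pos.
  exists (atan (La / Lb)); apply: continuity_seq; first exact: continuity_pt_atan.
  by apply: Un_cv_div_ratio HLa HLb => //; lra.
have La_neq0 : La <> 0 by lra.
have Hba := Un_cv_div_ratio Ha Hd La_neq0 HLb HLa.
exists (PI / 2 - atan (Lb / La)).
apply: Un_cv_ext_pos (CV_minus _ _ _ _ (Un_cv_const _)
  (continuity_seq _ _ _ (continuity_pt_atan _) Hba)) => N HN.
by rewrite (atan_div_flip (Hb N HN) (Ha N HN)).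
Qed.

Lemma big_ratio_atan_cvg (I : Type) (F : I -> nat -> R) (r1 r2 : seq I) :
  (forall i, pos_seq (F i)) ->
  (forall i j, ratio_cvg (F i) (F j) \/ ratio_cvg (F j) (F i)) ->
  pos_seq (fun N => \big[Rplus/0]_(i <- r1) F i N) ->
  pos_seq (fun N => \big[Rplus/0]_(i <- r2) F i N) ->
  exists l, Un_cv (fun N => atan ((\big[Rplus/0]_(i <- r1) F i N) /
                                  (\big[Rplus/0]_(i <- r2) F i N))) l.
Proof.
move=> Fpos Fcmp H1 H2.
case: r1 H1 => [|i r1] H1; first by have := H1 1%nat (leqnn 1); rewrite big_nil; lra.
have [m Hm Hdom] := exists_dominant i (r1 ++ r2) Fpos Fcmp.
have [La HLa] : ratio_cvg (fun N => \big[Rplus/0]_(j <- i :: r1) F j N) (F m).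
  by apply: ratio_cvg_big => j Hj; apply: Hdom; apply: (In_catl (s1 := i :: r1)).
have [Lb HLb] : ratio_cvg (fun N => \big[Rplus/0]_(j <- r2) F j N) (F m).
  by apply: ratio_cvg_big => j Hj; apply: Hdom; apply: (In_catr (i :: r1)).
apply: (atan_ratio_cvg H1 H2 (Fpos m) HLa HLb).
suff : 1 <= La + Lb by lra.
apply: Un_cv_lb_pos (CV_plus _ _ _ _ HLa HLb) => N HN.
have Fm := Fpos m N HN.
rewrite -Rdiv_plus_distr -big_cat -(Rinv_r (F m N)); last lra.
apply: Rmult_le_compat_r; first by apply: Rlt_le; apply: Rinv_0_lt_compat.
by apply: sumR_ge_term => // j; apply: Rlt_le; apply: Fpos.
Qed.

Lemma ordered_family_scale (I : Type) (p a : I -> nat -> R) (c : nat -> R) :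
  ordered_family p -> pos_seq c ->
  (forall x N, (1 <= N)%nat -> a x N = p x N * c N) -> ordered_family a.
Proof.
move=> [Hpos Hcvg] Hc Ea; split=> [x N HN | r s Nrs].
  by rewrite Ea //; apply: Rmult_lt_0_compat; [apply: Hpos | apply: Hc].
have [l Hl] := Hcvg r s Nrs; exists l; apply: Un_cv_ext_pos Hl => N HN.
rewrite !Ea //; congr atan; move: (Hpos s N HN) (Hc N HN) => ? ?; field; lra.
Qed.

End Sequences.

Section RatePolynomials.
Local Open Scope R_scope.
Variables (E : finType) (Rn : nat -> E -> E -> R).
Hypothesis HA : assumptionA Rn.

Lemma exps0_eq0 (k : exps Rn 0) x y : x != y -> proj1_sig k x y = 0%nat.
Proof.
case: k => k [_ Hs] /= Hxy; move: Hs; rewrite (bigD1 (x, y)) //=.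
by move/eqP; rewrite addn_eq0 => /andP[/eqP].
Qed.

Lemma rate_monomial_exps0 (k : exps Rn 0) N : rate_monomial k N = 1.
Proof. by rewrite /rate_monomial big1 // => p /exps0_eq0 ->. Qed.

Lemma rate_monomial_gt0 d (k : exps Rn d) N : (1 <= N)%nat -> 0 < rate_monomial k N.
Proof.
case: d k => [|d] k HN; first by rewrite rate_monomial_exps0; lra.
exact: (proj1 (proj2 HA d.+1 isT)).
Qed.

Lemma rate_monomials_comparable d (k1 k2 : exps Rn d) :
  ratio_cvg (rate_monomial k1) (rate_monomial k2) \/
  ratio_cvg (rate_monomial k2) (rate_monomial k1).
Proof.
have Hpos (k : exps Rn d) : pos_seq (rate_monomial k) by move=> N; apply: rate_monomial_gt0.
case: (classic (k1 = k2)) => [->|Hne]; first by left; apply: ratio_cvg_refl.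
case: d k1 k2 Hne Hpos => [|d] k1 k2 Hne Hpos.
  left; exists 1; apply: Un_cv_ext (Un_cv_const 1) => N.
  by rewrite !rate_monomial_exps0 /Rdiv Rinv_1 Rmult_1_l.
by apply: comparable_of_atan_cvg => //; apply: (proj2 (proj2 HA d.+1 isT)).
Qed.

Lemma exps_zero_subproof :
  (forall x y : E, (0 <> 0)%nat -> inB Rn x y) /\
  \big[addn/0%nat]_(p : E * E | p.1 != p.2) 0%nat = 0%nat.
Proof. by split => //; rewrite big1. Qed.

Definition exps_zero : exps Rn 0 := exist _ (fun _ _ => 0%nat) exps_zero_subproof.

Lemma exps_add_subproof d e (k1 : exps Rn d) (k2 : exps Rn e) :
  (forall x y, (proj1_sig k1 x y + proj1_sig k2 x y)%nat <> 0%nat -> inB Rn x y) /\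
  \big[addn/0%nat]_(p : E * E | p.1 != p.2) (proj1_sig k1 p.1 p.2 + proj1_sig k2 p.1 p.2)%nat
    = (d + e)%nat.
Proof.
case: k1 k2 => [k1 [B1 S1]] [k2 [B2 S2]] /=; split; last by rewrite big_split /= S1 S2.
by move=> x y; case: (k1 x y) (B1 x y) => [|n] H1 H12; [apply: B2 | apply: H1].
Qed.

Definition exps_add d e (k1 : exps Rn d) (k2 : exps Rn e) : exps Rn (d + e) :=
  exist _ (fun x y => proj1_sig k1 x y + proj1_sig k2 x y)%nat (exps_add_subproof k1 k2).

Lemma rate_monomialD d e (k1 : exps Rn d) (k2 : exps Rn e) N :
  rate_monomial (exps_add k1 k2) N = rate_monomial k1 N * rate_monomial k2 N.
Proof. by rewrite /rate_monomial -big_split; apply: eq_bigr => p _; apply: pow_add. Qed.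

Lemma exps_edge_subproof x y : inB Rn x y ->
  (forall a b, (if (a == x) && (b == y) then 1 else 0)%nat <> 0%nat -> inB Rn a b) /\
  \big[addn/0%nat]_(p : E * E | p.1 != p.2) (if (p.1 == x) && (p.2 == y) then 1 else 0)%nat
    = 1%nat.
Proof.
move=> Bxy; split; first by move=> a b; case: (a =P x) => [->|] //; case: (b =P y) => [->|].
have Hxy : (x, y).1 != (x, y).2 by apply/eqP; case: Bxy.
rewrite (bigD1 (x, y)) //= !eqxx big1 // => -[a b] /andP[_ Hab] /=.
by case: (a =P x) Hab => [->|] //; case: (b =P y) => [->|] //; rewrite eqxx.
Qed.

Definition exps_edge x y (Bxy : inB Rn x y) : exps Rn 1 :=
  exist _ (fun a b => if (a == x) && (b == y) then 1%nat else 0%nat) (exps_edge_subproof Bxy).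

Lemma rate_monomial_edge x y (Bxy : inB Rn x y) N :
  rate_monomial (exps_edge Bxy) N = Rn N x y.
Proof.
have Hxy : (x, y).1 != (x, y).2 by apply/eqP; case: Bxy.
rewrite /rate_monomial (bigD1 (x, y)) //= !eqxx pow_1 big1 ?Rmult_1_r //.
move=> -[a b] /andP[_ Hab] /=.
by case: (a =P x) Hab => [->|] //; case: (b =P y) => [->|] //; rewrite eqxx.
Qed.

Definition rate_poly d (f : nat -> R) := exists ks : seq (exps Rn d),
  forall N, (1 <= N)%nat -> f N = \big[Rplus/0]_(k <- ks) rate_monomial k N.

Lemma rate_poly_ext d f g :
  (forall N, (1 <= N)%nat -> f N = g N) -> rate_poly d f -> rate_poly d g.
Proof. by move=> Efg [ks Hks]; exists ks => N HN; rewrite -Efg // Hks. Qed.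

Lemma rate_poly0 d : rate_poly d (fun _ => 0).
Proof. by exists [::] => N _; rewrite big_nil. Qed.

Lemma rate_poly1 : rate_poly 0 (fun _ => 1).
Proof. by exists [:: exps_zero] => N _; rewrite big_seq1 rate_monomial_exps0. Qed.

Lemma rate_polyD d f g : rate_poly d f -> rate_poly d g -> rate_poly d (fun N => f N + g N).
Proof. by move=> [ks1 H1] [ks2 H2]; exists (ks1 ++ ks2) => N HN; rewrite big_cat H1 // H2. Qed.

Lemma rate_poly_big d (I : Type) (r : seq I) (P : pred I) (F : I -> nat -> R) :
  (forall i, P i -> rate_poly d (F i)) ->
  rate_poly d (fun N => \big[Rplus/0]_(i <- r | P i) F i N).
Proof.
move=> HF; elim: r => [|i r IH].
  by apply: rate_poly_ext (rate_poly0 d) => N _; rewrite big_nil.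
case Pi: (P i); last by apply: rate_poly_ext IH => N _; rewrite big_cons Pi.
by apply: rate_poly_ext (rate_polyD (HF i Pi) IH) => N _; rewrite big_cons Pi.
Qed.

Lemma rate_polyM d e f g :
  rate_poly d f -> rate_poly e g -> rate_poly (d + e) (fun N => f N * g N).
Proof.
move=> [ks1 H1] [ks2 H2]; exists [seq exps_add k1 k2 | k1 <- ks1, k2 <- ks2] => N HN.
rewrite H1 // H2 // big_allpairs_dep big_distrlr.
by apply: eq_bigr => k1 _; apply: eq_bigr => k2 _; rewrite rate_monomialD.
Qed.

Lemma rate_poly_rate x y : x <> y -> rate_poly 1 (fun N => Rn N x y).
Proof.
move=> Nxy; case: (Rlt_le_dec 0 (Rn 1%nat x y)) => R1xy.
  have Bxy : inB Rn x y by [].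
  by exists [:: exps_edge Bxy] => N _; rewrite big_seq1 rate_monomial_edge.
case: (proj1 HA x y Nxy) => H; first by apply: rate_poly_ext (rate_poly0 1) => N HN; rewrite H.
by have := H 1%nat (leqnn 1); lra.
Qed.

Lemma rate_poly_ge0 d f N : rate_poly d f -> (1 <= N)%nat -> 0 <= f N.
Proof.
move=> [ks Hks] HN; rewrite Hks //; apply: sumR_ge0 => k _.
by apply: Rlt_le; apply: rate_monomial_gt0.
Qed.

End RatePolynomials.

Section Elimination.
Local Open Scope R_scope.
Variable E : finType.

Inductive reach_in (S : {set E}) (q : E -> E -> R) : E -> E -> Prop :=
  | reach_in_refl x : reach_in S q x x
  | reach_in_step x y z :
      x <> y -> y \in S -> 0 < q x y -> reach_in S q y z -> reach_in S q x z.

Definition connected_in (S : {set E}) (q : E -> E -> R) :=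
  forall x y, x \in S -> y \in S -> reach_in S q x y.

Definition balanced (S : {set E}) (q : E -> E -> R) (v : E -> R) :=
  forall xi, xi \in S ->
    \big[Rplus/0]_(eta in S | eta != xi) (v eta * q eta xi) =
    v xi * \big[Rplus/0]_(zeta in S | zeta != xi) q xi zeta.

Definition exit_rate (S : {set E}) (q : E -> E -> R) z :=
  \big[Rplus/0]_(w in S | w != z) q z w.

(* The censored chain on S :\ z has rates q a b + q a z * q z b / t, with t the exit rate
   of z; multiplying by t keeps them polynomial in the original rates. *)
Definition elim_rates (S : {set E}) (q : E -> E -> R) z a b :=
  q a b * exit_rate S q z + q a z * q z b.

(* Weights on S :\ z, scaled by t, extended to z through the balance equation at z. *)
Definition extend_weights (S : {set E}) (q : E -> E -> R) z (p : E -> R) x :=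
  if x == z then \big[Rplus/0]_(eta in S :\ z) (p eta * q eta z)
  else p x * exit_rate S q z.

Lemma reach_in_setT (q : E -> E -> R) x y : reach q x y -> reach_in [set: E] q x y.
Proof.
elim=> [a | a b c Nab Qab _ IH]; first exact: reach_in_refl.
by apply: reach_in_step IH; rewrite ?in_setT.
Qed.

Lemma balanced_setT (q : E -> E -> R) (v : E -> R) :
  (forall xi, \big[Rplus/0]_(eta | eta != xi) (v eta * q eta xi) =
              v xi * \big[Rplus/0]_(zeta | zeta != xi) q xi zeta) ->
  balanced [set: E] q v.
Proof.
move=> Hb xi _.
have Eset (F : E -> R) : \big[Rplus/0]_(e in [set: E] | e != xi) F e =
    \big[Rplus/0]_(e | e != xi) F e by apply: eq_bigl => e; rewrite in_setT.
by rewrite !Eset Hb.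
Qed.

Lemma sum_in_neq_split (S : {set E}) a b (F : E -> R) : a \in S -> a != b ->
  \big[Rplus/0]_(i in S | i != b) F i = F a + \big[Rplus/0]_(i in S :\ a | i != b) F i.
Proof.
move=> Ha Nab; rewrite (bigD1 a) /=; last by rewrite Ha.
congr Rplus; apply: eq_bigl => i.
by rewrite in_setD1; case: (i \in S); case: (i != a); case: (i != b).
Qed.

Lemma sum_setD1_neqC (S : {set E}) a b (F : E -> R) :
  \big[Rplus/0]_(i in S :\ a | i != b) F i = \big[Rplus/0]_(i in S :\ b | i != a) F i.
Proof.
apply: eq_bigl => i.
by rewrite !in_setD1; case: (i \in S); case: (i != a); case: (i != b).
Qed.

Section Rates.
Variables (S : {set E}) (q : E -> E -> R).
Hypothesis q_ge0 : forall x y, x \in S -> y \in S -> x <> y -> 0 <= q x y.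

Lemma reach_in_first_edge x y : reach_in S q x y -> x <> y ->
  exists2 w, w \in S & x <> w /\ 0 < q x w.
Proof. by case=> [|a b c Nab Hb Qab _] // _; exists b. Qed.

Lemma reach_in_last_edge x y : reach_in S q x y -> x <> y -> x \in S ->
  exists2 eta, eta \in S & eta <> y /\ 0 < q eta y.
Proof.
elim=> [// | a b c Nab Hb Qab _ IH] Nac Ha.
case: (eqVneq b c) => [Ebc | Nbc]; first by subst c; exists a.
by apply: IH => //; apply/eqP.
Qed.

Lemma exit_rate_gt0 z y : connected_in S q -> z \in S -> y \in S -> y != z ->
  0 < exit_rate S q z.
Proof.
move=> Hc Hz Hy Nyz.
have [w Hw [Nzw Qzw]] := reach_in_first_edge (Hc z y Hz Hy) (nesym (elimN eqP Nyz)).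
apply: (sumR_gt0 (j := w)); rewrite ?Hw ?(introN eqP (nesym Nzw)) //.
by move=> i /andP[Hi Niz]; apply: q_ge0 => //; apply/eqP; rewrite eq_sym.
Qed.

Lemma sum_entry_gt0 (p : E -> R) z y :
  connected_in S q -> z \in S -> y \in S -> y != z ->
  (forall x, x \in S :\ z -> 0 < p x) ->
  0 < \big[Rplus/0]_(eta in S :\ z) (p eta * q eta z).
Proof.
move=> Hc Hz Hy Nyz Hp.
have [eta Heta [Netaz Qetaz]] := reach_in_last_edge (Hc y z Hy Hz) (elimN eqP Nyz) Hy.
have Heta' : eta \in S :\ z by rewrite in_setD1 Heta andbT; apply/eqP.
apply: (sumR_gt0 (j := eta)) => // [i Hi|]; last by apply: Rmult_lt_0_compat => //; apply: Hp.
move: (Hi); rewrite in_setD1 => /andP[/eqP Niz HiS].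
by apply: Rmult_le_pos; [apply: Rlt_le; apply: Hp | apply: q_ge0].
Qed.

Section Eliminate.
Variable z : E.
Hypotheses (Hz : z \in S) (exit_gt0 : 0 < exit_rate S q z).

Lemma elim_rates_gt0 a b : a \in S -> b \in S -> a <> z -> b <> z -> a <> b ->
  0 < q a b \/ 0 < q a z /\ 0 < q z b -> 0 < elim_rates S q z a b.
Proof.
move=> Ha Hb Naz Nbz Nab Hq.
have := q_ge0 Ha Hb Nab; have := q_ge0 Ha Hz Naz; have := q_ge0 Hz Hb (nesym Nbz).
rewrite /elim_rates => Hzb Haz Hab; case: Hq => [Hab' | [Haz' Hzb']].
  by have := Rmult_lt_0_compat _ _ Hab' exit_gt0; have := Rmult_le_pos _ _ Haz Hzb; lra.
have := Rmult_le_pos _ _ Hab (Rlt_le _ _ exit_gt0).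
by have := Rmult_lt_0_compat _ _ Haz' Hzb'; lra.
Qed.

(* The second conjunct handles paths that start at z: they can be entered from any state
   jumping into z. *)
Lemma reach_in_elim x y : reach_in S q x y -> x \in S -> y \in S :\ z ->
  (x <> z -> reach_in (S :\ z) (elim_rates S q z) x y) /\
  (x = z -> forall u, u \in S :\ z -> 0 < q u z -> reach_in (S :\ z) (elim_rates S q z) u y).
Proof.
elim=> [a | a b c Nab Hb Qab _ IH] Ha Hc.
  by split=> [_ | Eaz]; [apply: reach_in_refl | move: Hc; rewrite Eaz in_setD1 eqxx].
have [IH1 IH2] := IH Hb Hc.
split=> [Naz | Eaz u Hu Quz].
  case: (eqVneq b z) => [Ebz | Nbz].
    by subst b; apply: IH2 => //; rewrite in_setD1 Ha andbT; apply/eqP.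
  apply: (reach_in_step (y := b)) (IH1 (elimN eqP Nbz)) => //; first by rewrite in_setD1 Nbz.
  by apply: elim_rates_gt0 => //; [apply/eqP | left].
subst a; have Nbz : b <> z by apply: nesym.
case: (eqVneq u b) => [-> | Nub]; first exact: IH1.
move: Hu; rewrite in_setD1 => /andP[/eqP Nuz HuS].
apply: (reach_in_step (y := b)) (IH1 Nbz); first exact/eqP.
  by rewrite in_setD1 Hb andbT; apply/eqP.
by apply: elim_rates_gt0 => //; [apply/eqP | right].
Qed.

Lemma connected_in_elim : connected_in S q -> connected_in (S :\ z) (elim_rates S q z).
Proof.
move=> Hc x y Hx Hy; move: (Hx); rewrite in_setD1 => /andP[/eqP Nxz HxS].
exact: (reach_in_elim (Hc x y HxS (subsetP (subD1set S z) y Hy)) HxS Hy).1.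
Qed.

End Eliminate.

Lemma extend_weights_gt0 z y (p : E -> R) :
  connected_in S q -> z \in S -> y \in S -> y != z ->
  (forall x, x \in S :\ z -> 0 < p x) ->
  forall x, x \in S -> 0 < extend_weights S q z p x.
Proof.
move=> Hc Hz Hy Nyz Hp x Hx; rewrite /extend_weights; case: eqVneq => [_ | Nxz].
  exact: sum_entry_gt0 Hy Nyz Hp.
apply: Rmult_lt_0_compat; last exact: exit_rate_gt0 Hy Nyz.
by apply: Hp; rewrite in_setD1 Nxz.
Qed.

End Rates.

Lemma balanced_entry (S : {set E}) q v z : z \in S -> balanced S q v ->
  v z * exit_rate S q z = \big[Rplus/0]_(eta in S :\ z) (v eta * q eta z).
Proof.
move=> Hz Hb; rewrite /exit_rate -Hb //.
by apply: eq_bigl => e; rewrite in_setD1 andbC.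
Qed.

Lemma balanced_elim (S : {set E}) q v z : z \in S -> balanced S q v ->
  balanced (S :\ z) (elim_rates S q z) v.
Proof.
move=> Hz Hb xi Hxi; move: (Hxi); rewrite in_setD1 => /andP[Nxz HxS].
have Nzx : z != xi by rewrite eq_sym.
have Bx := Hb xi HxS; rewrite !(sum_in_neq_split _ Hz Nzx) in Bx.
have Bz : \big[Rplus/0]_(eta in S | eta != z) (v eta * q eta z) = v z * exit_rate S q z.
  exact: Hb.
rewrite (sum_in_neq_split _ HxS Nxz) sum_setD1_neqC in Bz.
have Et : exit_rate S q z = q z xi + \big[Rplus/0]_(w in S :\ z | w != xi) q z w.
  by rewrite /exit_rate (sum_in_neq_split _ HxS Nxz) sum_setD1_neqC.
rewrite /elim_rates.
under eq_bigr => eta _ do rewrite Rmult_plus_distr_l -!Rmult_assoc.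
rewrite big_split -!big_distrl big_split -big_distrl -big_distrr /=.
move: Bx Bz Et.
set A1 := \big[Rplus/0]_(i in S :\ z | i != xi) (v i * q i xi).
set A2 := \big[Rplus/0]_(i in S :\ z | i != xi) (v i * q i z).
set O := \big[Rplus/0]_(i in S :\ z | i != xi) q xi i.
set T := \big[Rplus/0]_(i in S :\ z | i != xi) q z i.
set t := exit_rate S q z.
clearbody A1 A2 O T t => Bx Bz Et.
(* The balance equations at xi and at z determine A1 and A2. *)
have -> : A1 = v xi * (q xi z + O) - v z * q z xi by lra.
have -> : A2 = v z * t - v xi * q xi z by lra.
by rewrite Et; ring.
Qed.

Lemma extend_weights_proportional (S : {set E}) q z (v p : E -> R) :
  z \in S -> balanced S q v ->
  (forall x y, x \in S :\ z -> y \in S :\ z -> v x * p y = v y * p x) ->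
  forall x y, x \in S -> y \in S ->
  v x * extend_weights S q z p y = v y * extend_weights S q z p x.
Proof.
move=> Hz Hb Hp.
have Hzy y : y \in S :\ z -> v z * extend_weights S q z p y = v y * extend_weights S q z p z.
  move=> Hy; rewrite /extend_weights eqxx ifN; last by move: Hy; rewrite in_setD1 => /andP[].
  transitivity (p y * (v z * exit_rate S q z)); first ring.
  rewrite (balanced_entry Hz Hb) !big_distrr /=; apply: eq_bigr => eta Heta.
  by transitivity ((v eta * p y) * q eta z); [ring | rewrite Hp //; ring].
move=> x y Hx Hy.
case: (eqVneq x z) => [-> | Nxz]; case: (eqVneq y z) => [-> | Nyz] //.
- by apply: Hzy; rewrite in_setD1 Nyz.
- by symmetry; apply: Hzy; rewrite in_setD1 Nxz.
rewrite /extend_weights (negbTE Nxz) (negbTE Nyz).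
transitivity ((v x * p y) * exit_rate S q z); first ring.
by rewrite Hp ?in_setD1 ?Nxz ?Nyz //; ring.
Qed.

End Elimination.

Section InvariantWeights.
Local Open Scope R_scope.
Variables (E : finType) (Rn : nat -> E -> E -> R).
Hypothesis HA : assumptionA Rn.

Definition poly_weights (S : {set E}) (nu : nat -> E -> R) :=
  exists D (P : E -> nat -> R),
    [/\ forall x, x \in S -> rate_poly Rn D (P x),
        forall x N, x \in S -> (1 <= N)%nat -> 0 < P x N &
        forall x y N, x \in S -> y \in S -> (1 <= N)%nat ->
          nu N x * P y N = nu N y * P x N].

Lemma poly_weights_small (S : {set E}) nu : (#|S| <= 1)%nat -> poly_weights S nu.
Proof.
move=> /card_le1_eqP HS; exists 0%nat, (fun _ _ => 1).
split=> [x _ | x N _ _ | x y N Hx Hy _].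
- exact: rate_poly1.
- lra.
- by rewrite (HS x y Hx Hy).
Qed.

Section PolyRates.
Variables (S : {set E}) (d : nat) (Q : nat -> E -> E -> R).
Hypothesis Q_poly :
  forall x y, x \in S -> y \in S -> x <> y -> rate_poly Rn d (fun N => Q N x y).

Lemma rate_poly_ge0_in N : (1 <= N)%nat ->
  forall x y, x \in S -> y \in S -> x <> y -> 0 <= Q N x y.
Proof. by move=> HN x y Hx Hy Nxy; apply: (rate_poly_ge0 HA (Q_poly Hx Hy Nxy)). Qed.

Lemma rate_poly_exit_rate z : z \in S -> rate_poly Rn d (fun N => exit_rate S (Q N) z).
Proof.
move=> Hz; apply: rate_poly_big => w /andP[Hw Nwz]; apply: Q_poly => //.
by apply/eqP; rewrite eq_sym.
Qed.

Lemma rate_poly_elim_rates z : z \in S ->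
  forall x y, x \in S :\ z -> y \in S :\ z -> x <> y ->
  rate_poly Rn (d + d) (fun N => elim_rates S (Q N) z x y).
Proof.
move=> Hz x y; rewrite !in_setD1 => /andP[/eqP Nxz Hx] /andP[/eqP Nyz Hy] Nxy.
apply: rate_polyD; first exact: rate_polyM (Q_poly Hx Hy Nxy) (rate_poly_exit_rate Hz).
exact: rate_polyM (Q_poly Hx Hz Nxz) (Q_poly Hz Hy (nesym Nyz)).
Qed.

Lemma poly_weights_extend z y nu :
  z \in S -> y \in S -> y != z ->
  (forall N, (1 <= N)%nat -> connected_in S (Q N)) ->
  (forall N, (1 <= N)%nat -> balanced S (Q N) (nu N)) ->
  poly_weights (S :\ z) nu -> poly_weights S nu.
Proof.
move=> Hz Hy Nyz Hc Hb [D [P [HP HPpos HPnu]]].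
exists (D + d)%nat, (fun x N => extend_weights S (Q N) z (P^~ N) x); split.
- move=> x Hx; rewrite /extend_weights; case: eqVneq => [_ | Nxz].
    apply: rate_poly_big => eta Heta.
    move: (Heta); rewrite in_setD1 => /andP[/eqP Netaz HetaS].
    exact: rate_polyM (HP _ Heta) (Q_poly HetaS Hz Netaz).
  by apply: rate_polyM (rate_poly_exit_rate Hz); apply: HP; rewrite in_setD1 Nxz.
- move=> x N Hx HN; apply: extend_weights_gt0 Hy Nyz _ x Hx => //.
  + exact: rate_poly_ge0_in.
  + exact: Hc.
  + by move=> x' Hx'; apply: HPpos.
- move=> x x' N Hx Hx' HN; apply: extend_weights_proportional Hx Hx' => //; first exact: Hb.
  by move=> a b Ha Hb'; apply: HPnu.
Qed.

End PolyRates.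

Lemma poly_weights_of_balanced (S : {set E}) d (Q : nat -> E -> E -> R) nu :
  (forall x y, x \in S -> y \in S -> x <> y -> rate_poly Rn d (fun N => Q N x y)) ->
  (forall N, (1 <= N)%nat -> connected_in S (Q N)) ->
  (forall N, (1 <= N)%nat -> balanced S (Q N) (nu N)) ->
  poly_weights S nu.
Proof.
have [n] := ubnP #|S|; elim: n S d Q => // n IH S d Q; rewrite ltnS => HSn HQ Hc Hb.
case: (leqP #|S| 1) => [HS1 | HS1]; first exact: poly_weights_small.
have [z Hz] : exists z, z \in S by apply/card_gt0P; apply: ltn_trans HS1.
have HSz : #|S :\ z| = #|S|.-1 by rewrite (cardsD1 z S) Hz.
have [y Hy] : exists y, y \in S :\ z by apply/card_gt0P; rewrite HSz -ltnS prednK // ltnW.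
move: (Hy); rewrite in_setD1 => /andP[Nyz HyS].
apply: (poly_weights_extend HQ Hz HyS Nyz Hc Hb).
have exit_gt0 N : (1 <= N)%nat -> 0 < exit_rate S (Q N) z.
  by move=> HN; apply: (exit_rate_gt0 (rate_poly_ge0_in HQ HN) _ Hz HyS Nyz); apply: Hc.
apply: (IH _ (d + d)%nat (fun N => elim_rates S (Q N) z)).
- by rewrite HSz -ltnS prednK // ltnW.
- exact: rate_poly_elim_rates.
- move=> N HN.
  exact: (connected_in_elim (rate_poly_ge0_in HQ HN) Hz (exit_gt0 N HN) (Hc N HN)).
- by move=> N HN; apply: balanced_elim (Hb N HN).
Qed.

Lemma ordered_family_rate_poly D (p : E -> nat -> R) :
  (forall x, rate_poly Rn D (p x)) -> (forall x, pos_seq (p x)) -> ordered_family p.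
Proof.
move=> Hp Hpos; split=> [x N HN | r s _]; first exact: Hpos.
have [ks1 H1] := Hp r; have [ks2 H2] := Hp s.
have pos1 : pos_seq (fun N => \big[Rplus/0]_(k <- ks1) rate_monomial k N).
  by move=> N HN; rewrite -H1 //; apply: Hpos.
have pos2 : pos_seq (fun N => \big[Rplus/0]_(k <- ks2) rate_monomial k N).
  by move=> N HN; rewrite -H2 //; apply: Hpos.
have [l Hl] := big_ratio_atan_cvg (F := @rate_monomial E Rn D)
  (fun k => rate_monomial_gt0 HA k) (@rate_monomials_comparable _ _ HA D) pos1 pos2.
by exists l; apply: Un_cv_ext_pos Hl => N HN; rewrite H1 // H2.
Qed.

End InvariantWeights.

Unset Implicit Arguments.
Set Strict Implicit.

Theorem lemma3p2 (E : finType) (Rn : nat -> E -> E -> R) (mu : nat -> E -> R) :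
  (forall N x y, (1 <= N)%nat -> x <> y -> (0 <= Rn N x y)%R) ->
  (forall N, (1 <= N)%nat -> irreducible (Rn N)) ->
  (forall N, (1 <= N)%nat -> invariant_prob (Rn N) (mu N)) ->
  assumptionA Rn ->
  ordered_family (fun (x : E) (N : nat) => mu N x).
Proof.
(* Nonnegativity of the rates is implied by Assumption A(i). *)
move=> _ Hirr Hinv HA.
have [D [P [HP HPpos HPmu]]] : poly_weights Rn [set: E] mu.
  apply: (poly_weights_of_balanced HA (d := 1%nat) (Q := Rn)).
  - by move=> x y _ _; apply: rate_poly_rate.
  - by move=> N HN x y _ _; apply/reach_in_setT/Hirr.
  - by move=> N HN; apply: balanced_setT; case: (Hinv N HN) => _ [].
pose Z N := \big[Rplus/0%R]_(y : E) P y N.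
have Z_gt0 N : (1 <= N)%nat -> (0 < Z N)%R.
  move=> HN; have [_ [Hsum _]] := Hinv N HN.
  case: (pickP (fun _ : E => true)) => [x _ | E0].
    by apply: (sumR_gt0 (j := x)) => // [y _ |]; [apply/Rlt_le |]; apply: HPpos.
  by move: Hsum; rewrite big_pred0 //; lra.
apply: (ordered_family_scale (c := fun N => (/ Z N)%R)
  (ordered_family_rate_poly HA (fun x => HP x (in_setT x)) (fun x N => HPpos x N (in_setT x)))).
- by move=> N HN; apply/Rinv_0_lt_compat/Z_gt0.
- move=> x N HN; have [_ [Hsum _]] := Hinv N HN.
  apply: (proportional_normalized Hsum (Z_gt0 N HN)) => a b.
  exact: HPmu (in_setT a) (in_setT b) HN.
Qed.
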